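(* Let $n\ge 118$ be an integer and let $k$ be real with $\frac{n-10}{2}-\sqrt n<k<\frac{n-10}{2}+\sqrt n$. Set $p=1+\frac8k$ and $q=\frac{n-8}{2}$. Then $pJ_1-q_1>0$, where $$-J_1=k(k+2-n)(k+4)(k+6-n)(k+6)(k+8-n)+(k+2)(k+4-n)(k+4)(k+6-n)(k+6)(k+8-n)+k(k+2-n)(k+2)(k+4-n)(k+6)(k+8-n)+k(k+2-n)(k+2)(k+4-n)(k+4)(k+6-n),$$ $$q_1=2\big((q+2)(n-q-4)+q(n-q-2)\big)\,q(q+2-n)(q+2)(q+4-n).$$
   Context: Here $k=\frac{8}{p-1}$ corresponds to the homogeneity degree of solutions of $\Delta^4u=|u|^{p-1}u$; the claim is a purely algebraic inequality in the real variable $k$ and the integer $n$. *)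

From Stdlib Require Import Reals.
Open Scope R_scope.

Definition minusJ1 (n k : R) : R :=
  k*(k+2-n)*(k+4)*(k+6-n)*(k+6)*(k+8-n)
  + (k+2)*(k+4-n)*(k+4)*(k+6-n)*(k+6)*(k+8-n)
  + k*(k+2-n)*(k+2)*(k+4-n)*(k+6)*(k+8-n)
  + k*(k+2-n)*(k+2)*(k+4-n)*(k+4)*(k+6-n).

Definition J1 (n k : R) : R := - minusJ1 n k.

Definition q1 (n q : R) : R :=
  2 * ((q+2)*(n-q-4) + q*(n-q-2)) * q*(q+2-n)*(q+2)*(q+4-n).

(** Write [n = s^2] and [k = (s^2 - 10)/2 + s u], so that the hypotheses say
    [s >= sqrt 118 > 10] and [|u| < 1].  Clearing the denominator of
    [p = (k + 8)/k], the quantity [k (p J1 - q1)] becomes a polynomial of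
    degree 12 in [s] whose coefficients are polynomials in [u]; the leading
    one is [1/2 - 3/8 u^2 >= 1/8].  Bounding every coefficient from below
    uniformly in [u] and running Horner's scheme at [s = 10] with these
    bounds gives only positive values, and Horner evaluation is monotone in
    the coefficients and the point as long as the running values stay
    nonnegative. *)

From Stdlib Require Import Reals Lra Psatz List.
Import ListNotations.
Open Scope R_scope.

Definition horner (s acc : R) (cs : list R) : R :=
  fold_left (fun a c => a * s + c) cs acc.

Fixpoint horner_run_nonneg (s acc : R) (cs : list R) : Prop :=
  match cs with
  | [] => True
  | c :: cs' => 0 <= acc /\ horner_run_nonneg s (acc * s + c) cs'
  end.

Lemma horner_le (s0 s : R) (bs cs : list R) (m acc : R) :
  0 <= s0 <= s -> Forall2 Rle bs cs -> m <= acc ->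
  horner_run_nonneg s0 m bs -> horner s0 m bs <= horner s acc cs.
Proof.
  intros Hs Hbc; revert m acc.
  induction Hbc as [|b c bs cs Hb _ IH]; intros m acc Hm Hrun; [exact Hm|].
  destruct Hrun as [Hm0 Hrun].
  apply IH; [nra | exact Hrun].
Qed.

Definition kgap (n k : R) : R := (k + 8) * J1 n k - k * q1 n ((n - 8) / 2).

Lemma gap_eq_kgap_div (n k : R) : k <> 0 ->
  (1 + 8 / k) * J1 n k - q1 n ((n - 8) / 2) = kgap n k / k.
Proof. intros Hk; unfold kgap; field; exact Hk. Qed.

Definition kgap_coeffs (u : R) : list R :=
  [ 1/2 - 3/8*u^2;
    3/4*u - 3/4*u^3;
    -51/8 + 9/4*u^2 + 3/2*u^4;
    -9/4*u + 3*u^5;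
    3/4 + 11*u^2 - 9*u^4 - 2*u^6;
    -28*u - 2*u^3 - 4*u^7;
    351/2 - 10*u^2 - 2*u^4 + 12*u^6;
    47*u + 32*u^3 + 44*u^5;
    -157 - 150*u^2 - 132*u^4;
    224*u - 76*u^3;
    -1126 + 228*u^2;
    36*u;
    -108 ].

Lemma kgap_expansion (s u : R) :
  kgap (s^2) ((s^2 - 10) / 2 + s * u) = horner s 0 (kgap_coeffs u).
Proof. unfold kgap, J1, minusJ1, q1, horner; simpl; field. Qed.

Definition kgap_coeff_lower_bounds : list R :=
  [1/8; -3/10; -51/8; -21/4; -41/4; -34; 327/2; -123; -439; -300; -1126; -36; -108].

Lemma kgap_coeffs_ge (u : R) : -1 <= u <= 1 ->
  Forall2 Rle kgap_coeff_lower_bounds (kgap_coeffs u).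
Proof.
  intros Hu.
  assert (Hu2 : 0 <= u^2 <= 1) by (split; nra).
  assert (Hu4 : 0 <= u^4 <= 1) by (replace (u^4) with ((u^2)^2) by ring; split; nra).
  assert (Hu6 : 0 <= u^6 <= 1) by (replace (u^6) with ((u^2)^3) by ring; split; nra).
  assert (Hu3 : -1 <= u^3 <= 1) by (replace (u^3) with (u * u^2) by ring; split; nra).
  assert (Hu5 : -1 <= u^5 <= 1) by (replace (u^5) with (u * u^4) by ring; split; nra).
  assert (Hu7 : -1 <= u^7 <= 1) by (replace (u^7) with (u * u^6) by ring; split; nra).
  repeat apply Forall2_cons; try apply Forall2_nil; try lra.
  (* [u - u^3 = (u + 4/7)^2 (8/7 - u) + u/49 - 128/343 >= -135/343 > -2/5]. *)
  assert (0 <= (u + 4/7)^2 * (8/7 - u)) by (apply Rmult_le_pos; [apply pow2_ge_0 | lra]).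
  nra.
Qed.

Lemma kgap_pos (s u : R) : 10 <= s -> -1 <= u <= 1 ->
  0 < kgap (s^2) ((s^2 - 10) / 2 + s * u).
Proof.
  intros Hs Hu; rewrite kgap_expansion.
  apply Rlt_le_trans with (horner 10 0 kgap_coeff_lower_bounds).
  - unfold horner; simpl; lra.
  - apply horner_le; [lra | now apply kgap_coeffs_ge | lra |].
    simpl; repeat split; lra.
Qed.

Theorem lemma8p2 (n : nat) (k : R) :
  (118 <= n)%nat ->
  (INR n - 10) / 2 - sqrt (INR n) < k < (INR n - 10) / 2 + sqrt (INR n) ->
  let p := 1 + 8 / k in
  let q := (INR n - 8) / 2 in
  p * J1 (INR n) k - q1 (INR n) q > 0.
Proof.
  intros Hn Hk p q.
  assert (HN : 118 <= INR n) by (apply le_INR in Hn; simpl in Hn; lra).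
  set (s := sqrt (INR n)) in *.
  assert (Hn_s : INR n = s^2) by (symmetry; apply pow2_sqrt; lra).
  assert (Hs : 10 <= s).
  { rewrite <- (sqrt_pow2 10) by lra; apply sqrt_le_1_alt; lra. }
  set (u := (k - (INR n - 10) / 2) / s).
  assert (Hk_u : k = (s^2 - 10) / 2 + s * u) by (unfold u; rewrite <- Hn_s; field; lra).
  assert (Hu : -1 <= u <= 1).
  { rewrite Hk_u, Hn_s in Hk; split; nra. }
  assert (Hk_pos : 0 < k) by nra.
  unfold p, q; rewrite gap_eq_kgap_div by lra.
  apply Rlt_gt, Rdiv_lt_0_compat; [|exact Hk_pos].
  rewrite Hn_s, Hk_u; now apply kgap_pos.
Qed.
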